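(* Let $G$ be a graph containing neither the cycle $C_4$ nor the cycle $C_6$ as a subgraph. For every MLD-set $S\subseteq V(G)$, the set $S\cup\pi(S)$ is a locating-dominating set of $G$. Consequently, $\gamma_L(G)\le \gamma_M(G)^2$.
   Context: All graphs are finite, simple, undirected and connected, with at least 2 vertices; $d(u,v)$ is the shortest-path distance and $N(x)$ the open neighborhood of $x$. A set $S\subseteq V(G)$ is resolving if for all distinct $x,y\in V(G)$ there is $u\in S$ with $d(u,x)\ne d(u,y)$; dominating if every vertex not in $S$ has a neighbor in $S$. An MLD-set is a set that is both resolving and dominating; $\gamma_M(G)$ is the minimum size of an MLD-set. A locating-dominating set (LD-set) is a dominating set $S$ such that $N(x)\cap S\ne N(y)\cap S$ for all distinct $x,y\in V(G)\setminus S$; $\gamma_L(G)$ is its minimum size. For $S\subseteq V(G)$ and $u,v\in S$, $\pi(u,v)$ is the set of vertices $u',v'$ such that $(u,u',v',v)$ is a path in $G$ (four distinct vertices with $uu',u'v',v'v\in E(G)$), and $\pi(S)=\bigcup_{u,v\in S}\pi(u,v)$. *)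

(* A graph is a finite type T with an edge relation e : rel T;
   simplicity (symmetric, irreflexive), connectedness and |V| >= 2 are
   hypotheses of the theorem. *)
From mathcomp Require Import all_boot.
Set Implicit Arguments. Unset Strict Implicit. Unset Printing Implicit Defensive.

Section Graph.
Variables (T : finType) (e : rel T).

Definition nbhd (x : T) : {set T} := [set y | e x y].

Fixpoint ball (n : nat) (u : T) : {set T} :=
  match n with
  | 0 => [set u]
  | n'.+1 => ball n' u :|: [set y | [exists x in ball n' u, e x y]]
  end.

(* shortest-path distance: least n with v in ball n u (correct for connected
   graphs, where every distance is < #|T|) *)
Definition dist (u v : T) : nat :=
  find (fun n => v \in ball n u) (iota 0 #|T|).

Definition connected_graph : Prop := forall u v : T, connect e u v.

Definition has_cycle (k : nat) : Prop :=
  exists f : 'I_k -> T, injective f /\ forall i : 'I_k, e (f i) (f (ordS i)).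

Definition resolving (S : {set T}) : bool :=
  [forall x, forall y, (x != y) ==> [exists u in S, dist u x != dist u y]].

Definition dominating (S : {set T}) : bool :=
  [forall x, (x \notin S) ==> [exists y in S, e x y]].

Definition MLD_set (S : {set T}) : bool := resolving S && dominating S.

Definition LD_set (S : {set T}) : bool :=
  dominating S &&
  [forall x, forall y,
     [&& x != y, x \notin S & y \notin S] ==> (nbhd x :&: S != nbhd y :&: S)].

Definition pi_pair (u v : T) : {set T} :=
  [set w | [exists u', exists v',
     [&& uniq [:: u; u'; v'; v], e u u', e u' v', e v' v & (w == u') || (w == v')]]].

Definition pi_set (S : {set T}) : {set T} :=
  \bigcup_(u in S) \bigcup_(v in S) pi_pair u v.

(* minimum sizes; V(G) is always both an MLD-set and an LD-set *)
Definition gammaM : nat := \big[minn/#|T|]_(S : {set T} | MLD_set S) #|S|.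
Definition gammaL : nat := \big[minn/#|T|]_(S : {set T} | LD_set S) #|S|.

End Graph.

From mathcomp Require Import all_boot.
Set Implicit Arguments. Unset Strict Implicit. Unset Printing Implicit Defensive.

(* Let S be an MLD-set and L a superset of S meeting every path a-b-c-d on four
   distinct vertices with a, d in S, in b or c, and in c whenever b and d are not
   adjacent. Then L is locating-dominating: if x, y outside L had the same
   neighbours in L and u in S resolved them with d(u,x) < d(u,y), walking back from
   x along a geodesic to u produces such a path avoiding L. S with pi(S) satisfies
   this criterion in any graph. In a C_4-free graph so does S with the smaller set
   [pi_far_set S] of the third vertices c of paths t-b-c-s (t, s in S) with b, s
   not adjacent; without C_4 and C_6 each pair (t, s) contributes at most one such c,
   whence |S| + |S|(|S|-1) = |S|^2 bounds gamma_L. *)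

Section Distance.
Variables (T : finType) (e : rel T).
Hypothesis e_conn : connected_graph e.

Lemma mem_ball_step n u a b : a \in ball e n u -> e a b -> b \in ball e n.+1 u.
Proof.
move=> aB ab; rewrite /= in_setU inE; apply/orP; right.
by apply/existsP; exists a; rewrite aB ab.
Qed.

Lemma path_last_ball x p : path e x p -> last x p \in ball e (size p) x.
Proof.
elim/last_ind: p => [|p y IHp]; first by rewrite /= inE.
rewrite rcons_path last_rcons size_rcons => /andP[/IHp pB ey].
exact: mem_ball_step pB ey.
Qed.

Lemma ball_reach u v : exists2 n, n < #|T| & v \in ball e n u.
Proof.
have /connectP [p up ->] := e_conn u v.
have [q uq Uq _] := shortenP up.
exists (size q); last exact: path_last_ball.
by rewrite -ltnS -[(size q).+1]/(size (u :: q)) -(card_uniqP Uq) ltnS max_card.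
Qed.

Lemma dist_leq u v n : v \in ball e n u -> dist e u v <= n.
Proof.
move=> vB; rewrite /dist; have [ltnT | geTn] := ltnP n #|T|.
  rewrite leqNgt; apply/negP => /(before_find 0).
  by rewrite nth_iota // add0n vB.
by apply: leq_trans (find_size _ _) _; rewrite size_iota.
Qed.

Lemma mem_ball_dist u v : v \in ball e (dist e u v) u.
Proof.
have [n ltnT vB] := ball_reach u v.
have hasB : has (fun n => v \in ball e n u) (iota 0 #|T|).
  by apply/hasP; exists n; rewrite ?mem_iota.
have := nth_find 0 hasB; rewrite nth_iota //.
by move: hasB; rewrite has_find size_iota.
Qed.

Lemma dist_edge u a b : e a b -> dist e u b <= (dist e u a).+1.
Proof. by move=> ab; apply/dist_leq/mem_ball_step/ab/mem_ball_dist. Qed.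

Lemma dist_eq0 u v : dist e u v = 0 -> u = v.
Proof. by move=> d0; have := mem_ball_dist u v; rewrite d0 inE => /eqP. Qed.

Lemma dist_prev u v : u != v -> exists2 w, e w v & (dist e u w).+1 = dist e u v.
Proof.
move=> uv; case d_uv: (dist e u v) => [|d].
  by move/dist_eq0: d_uv uv => ->; rewrite eqxx.
have := mem_ball_dist u v; rewrite d_uv /= in_setU => /orP[vB|].
  by have := dist_leq vB; rewrite d_uv ltnn.
rewrite inE => /exists_inP [w wB wv]; exists w => //.
have := dist_edge u wv; rewrite d_uv => le_dw.
by apply/eqP; rewrite eqn_leq ltnS dist_leq.
Qed.

End Distance.

Section LocatingDomination.
Variables (T : finType) (e : rel T).
Hypotheses (e_sym : symmetric e) (e_irr : irreflexive e) (e_conn : connected_graph e).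

Definition path4 (a b c d : T) := [&& uniq [:: a; b; c; d], e a b, e b c & e c d].

Lemma mem_notin_neq (A : {set T}) x y : x \in A -> y \notin A -> x != y.
Proof. by move=> xA; apply: contraNneq => <-. Qed.

Lemma path4_across (S : {set T}) a b c d :
  a \in S -> d \in S -> b \notin S -> c \notin S -> a != d ->
  e a b -> e b c -> e c d -> path4 a b c d.
Proof.
move=> aS dS bS cS ad ab bc cd; rewrite /path4 ab bc cd /= !inE !negb_or.
rewrite ad !(mem_notin_neq aS) // (eq_sym b d) (eq_sym c d) !(mem_notin_neq dS) //.
rewrite !andbT; apply: contraTneq _ bc => ->; by rewrite e_irr.
Qed.

Lemma dominating_nbr (S : {set T}) x :
  dominating e S -> x \notin S -> exists2 s, s \in S & e x s.
Proof. by move=> /forallP /(_ x) /implyP xdom /xdom /exists_inP. Qed.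

Section Separation.
Variables (S L : {set T}).
Hypotheses (domS : dominating e S) (sSL : S \subset L).
Hypothesis L_meets : forall a b c d,
  a \in S -> d \in S -> path4 a b c d -> (b \in L) || (c \in L).
Hypothesis L_chord : forall a b c d,
  a \in S -> d \in S -> path4 a b c d -> ~~ e b d -> c \in L.

(* With w, z the two vertices preceding x on a geodesic from u, the neighbour s of
   x in S is too far from u to be adjacent to z, and the neighbour in S of w or z
   spans with s a 4-path through w whose required vertex in L is w or x. *)
Lemma nbhd_in_neq x y u :
  x \notin L -> y \notin L -> u \in S -> dist e u x < dist e u y ->
  ~ {in L, e x =1 e y}.
Proof.
move=> xL yL uS lt_xy same.
have notS z : z \notin L -> z \notin S := contra (subsetP sSL z).
have [s sS xs] := dominating_nbr domS (notS _ xL).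
have far_s : dist e u x <= dist e u s.
  by rewrite -ltnS (leq_trans lt_xy) // dist_edge // e_sym -same ?(subsetP sSL).
have [w wx d_w] := dist_prev e_conn (mem_notin_neq uS (notS _ xL)).
have wL : w \notin L.
  apply: contraL lt_xy => wL; rewrite -leqNgt -d_w dist_edge //.
  by rewrite e_sym -same // e_sym.
have [z zw d_z] := dist_prev e_conn (mem_notin_neq uS (notS _ wL)).
have [r rS wr] := dominating_nbr domS (notS _ wL).
have ws : e w s.
  case: (eqVneq r s) => [<- // | rs].
  have := L_meets rS sS (path4_across rS sS (notS _ wL) (notS _ xL) rs _ wx xs).
  by rewrite e_sym wr (negPf wL) (negPf xL) => /(_ isT).
have far_z : (dist e u z).+1 < dist e u s by rewrite d_z d_w.
have zs : ~~ e z s by apply: contraL far_z => zs; rewrite -leqNgt dist_edge.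
have z_neq_s : z != s by apply: contraTneq _ far_z => ->; rewrite ltnNge leqnSn.
have [zS | zNS] := boolP (z \in S).
  have := L_meets zS sS (path4_across zS sS (notS _ wL) (notS _ xL) z_neq_s zw wx xs).
  by rewrite (negPf wL) (negPf xL).
have [t tS zt] := dominating_nbr domS zNS.
have t_neq_s : t != s by apply: contraNneq zs => <-.
rewrite e_sym in zt.
by have := L_chord tS sS (path4_across tS sS zNS (notS _ wL) t_neq_s zt zw ws) zs;
  rewrite (negPf wL).
Qed.

Lemma LD_set_of_paths : resolving e S -> LD_set e L.
Proof.
move=> resS; apply/andP; split.
  apply/forallP => x; apply/implyP => xL.
  have [s sS xs] := dominating_nbr domS (contra (subsetP sSL x) xL).
  by apply/exists_inP; exists s; rewrite ?(subsetP sSL).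
apply/forallP => x; apply/forallP => y; apply/implyP => /and3P [xy xL yL].
apply/negP => /eqP /setP same_tr.
have same : {in L, e x =1 e y}.
  by move=> z zL; have := same_tr z; rewrite !inE zL !andbT.
have /exists_inP [u uS] := implyP (forallP (forallP resS x) y) xy.
case: ltngtP => // lt _; first exact: nbhd_in_neq xL yL uS lt same.
by apply: nbhd_in_neq yL xL uS lt _ => z zL; rewrite same.
Qed.

End Separation.

Lemma mem_pi_set (S : {set T}) a d w :
  a \in S -> d \in S -> w \in pi_pair e a d -> w \in pi_set e S.
Proof. by move=> aS dS wP; apply/bigcupP; exists a => //; apply/bigcupP; exists d. Qed.

Lemma path4_pi_pair a b c d :
  path4 a b c d -> (b \in pi_pair e a d) && (c \in pi_pair e a d).
Proof.
case/and4P=> U ab bc cd; rewrite !inE; apply/andP; split;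
  by apply/existsP; exists b; apply/existsP; exists c; rewrite U ab bc cd !eqxx ?orbT.
Qed.

Lemma LD_set_pi_set (S : {set T}) : MLD_set e S -> LD_set e (S :|: pi_set e S).
Proof.
move=> /andP [resS domS].
have pi_path a b c d : a \in S -> d \in S -> path4 a b c d ->
    (b \in S :|: pi_set e S) && (c \in S :|: pi_set e S).
  move=> aS dS /path4_pi_pair /andP [bP cP].
  by rewrite !in_setU (mem_pi_set aS dS bP) (mem_pi_set aS dS cP) !orbT.
apply: (LD_set_of_paths domS (subsetUl _ _)) => //.
- by move=> a b c d aS dS /(pi_path _ _ _ _ aS dS) /andP [->].
- by move=> a b c d aS dS /(pi_path _ _ _ _ aS dS) /andP [_ ->].
Qed.

Lemma cycle_has_cycle x p : uniq (x :: p) -> cycle e (x :: p) -> has_cycle e (size p).+1.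
Proof.
move=> U /(pathP x) ep; exists (fun i => nth x (x :: p) i); split.
  by move=> i j /eqP; rewrite nth_uniq // => /eqP /val_inj.
case=> i /=; rewrite ltnS => le_ip.
have := ep i; rewrite size_rcons ltnS le_ip => /(_ isT).
rewrite -[x :: rcons p x]/(rcons (x :: p) x) nth_rcons_default nth_rcons.
case: ltngtP le_ip => // [lt_ip | ->] _; first by rewrite modn_small.
by rewrite modnn.
Qed.

Lemma path4_chord_C4 a b c d : path4 a b c d -> e b d -> e c a -> has_cycle e 4.
Proof.
case/and4P => U ab bc cd bd ca; apply: (@cycle_has_cycle a [:: b; d; c]).
  rewrite (perm_uniq (_ : perm_eq _ [:: a; b; c; d])) //.
  by rewrite !perm_cons (perm_catC [:: d] [:: c]).
by rewrite /= ab bd e_sym cd ca.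
Qed.

Definition pi_far (t s : T) : {set T} :=
  [set c | [exists b, path4 t b c s && ~~ e b s]].

Definition pi_far_set (S : {set T}) : {set T} :=
  \bigcup_(t in S) \bigcup_(s in S) pi_far t s.

Lemma pi_far_diag t : pi_far t t = set0.
Proof.
apply/setP => c; rewrite !inE; apply/existsP => -[b /andP [/and4P [U _ _ _] _]].
by move: U; rewrite /= !inE eqxx !orbT.
Qed.

(* Two distinct elements c, c' of pi_far t s close a C_4 through s when their
   paths share the vertex b, and a C_6 t-b-c-s-c'-b' otherwise. *)
Lemma card_pi_far_le1 t s :
  ~ has_cycle e 4 -> ~ has_cycle e 6 -> #|pi_far t s| <= 1.
Proof.
move=> noC4 noC6; apply/card_le1_eqP => c c'; rewrite !inE.
move=> /existsP [b /andP [/and4P [U tb bc cs] bs]].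
move=> /existsP [b' /andP [/and4P [U' tb' bc' c's] b's]].
apply/eqP/negPn/negP; rewrite eq_sym => c_neq_c'.
have b_neq_c' : b != c' by apply: contraNneq bs => ->.
have c_neq_b' : c != b' by apply: contraNneq b's => <-.
move: U U'; rewrite /= !inE !negb_or !andbT.
case/and3P=> /and3P [tb0 tc0 ts0] /andP [bc0 bs0] cs0.
case/and3P=> /and3P [tb'0 tc'0 _] /andP [b'c'0 b's0] c's0.
case: (eqVneq b b') => [eq_bb' | b_neq_b'].
  apply: noC4; apply: (@cycle_has_cycle b [:: c; s; c']).
    by rewrite /= !inE !negb_or bc0 bs0 b_neq_c' cs0 c_neq_c' eq_sym c's0.
  by rewrite /= bc cs (e_sym s) c's (e_sym c') eq_bb' bc'.
apply: noC6; apply: (@cycle_has_cycle t [:: b; c; s; c'; b']).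
  rewrite /= !inE !negb_or tb0 tc0 ts0 tc'0 tb'0 bc0 bs0 b_neq_c' b_neq_b' cs0.
  by rewrite c_neq_c' c_neq_b' (eq_sym s) c's0 (eq_sym s) b's0 (eq_sym c') b'c'0.
by rewrite /= tb bc cs (e_sym s) c's (e_sym c') bc' (e_sym b') tb'.
Qed.

Lemma path4_rev a b c d : path4 a b c d -> path4 d c b a.
Proof.
case/and4P=> U ab bc cd; rewrite /path4 -[[:: d; c; b; a]]/(rev [:: a; b; c; d]).
by rewrite rev_uniq U (e_sym d c) (e_sym c b) (e_sym b a) cd bc ab.
Qed.

Lemma mem_pi_far_set (S : {set T}) t b c s :
  t \in S -> s \in S -> path4 t b c s -> ~~ e b s -> c \in pi_far_set S.
Proof.
move=> tS sS p4 bs; apply/bigcupP; exists t => //; apply/bigcupP; exists s => //.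
by rewrite inE; apply/existsP; exists b; rewrite p4 bs.
Qed.

Lemma LD_set_pi_far_set (S : {set T}) :
  ~ has_cycle e 4 -> MLD_set e S -> LD_set e (S :|: pi_far_set S).
Proof.
move=> noC4 /andP [resS domS].
apply: (LD_set_of_paths domS (subsetUl _ _)) => // a b c d aS dS p4; last first.
  by move=> bd; rewrite in_setU (mem_pi_far_set aS dS p4 bd) orbT.
rewrite !in_setU; have [bd | bNd] := boolP (e b d); last first.
  by rewrite (mem_pi_far_set aS dS p4 bNd) !orbT.
have [ca | cNa] := boolP (e c a); first by case: noC4; apply: path4_chord_C4 p4 bd ca.
by rewrite (mem_pi_far_set dS aS (path4_rev p4) cNa) orbT.
Qed.

Lemma card_bigcup_le (I : finType) (P : pred I) (F : I -> {set T}) :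
  #|\bigcup_(i | P i) F i| <= \sum_(i | P i) #|F i|.
Proof.
elim/big_rec2: _ => [|i X n _ le_Xn]; first by rewrite cards0.
by apply: leq_trans (leq_card_setU _ _) _; rewrite leq_add2l.
Qed.

Lemma card_pi_far_set (S : {set T}) :
  ~ has_cycle e 4 -> ~ has_cycle e 6 -> #|pi_far_set S| <= #|S| * #|S|.-1.
Proof.
move=> noC4 noC6; apply: leq_trans (card_bigcup_le _ _) _.
rewrite -sum_nat_const; apply: leq_sum => t tS.
apply: leq_trans (card_bigcup_le _ _) _.
rewrite (bigD1 t) //= pi_far_diag cards0 add0n (cardsD1 t S) tS add1n -sum1_card.
rewrite [X in _ <= X](eq_bigl (fun s => (s \in S) && (s != t))); last first.
  by move=> s; rewrite !inE andbC.
by apply: leq_sum => s _; apply: card_pi_far_le1.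
Qed.

Lemma card_setU_pi_far_set (S : {set T}) :
  ~ has_cycle e 4 -> ~ has_cycle e 6 -> #|S :|: pi_far_set S| <= #|S| ^ 2.
Proof.
move=> noC4 noC6; apply: leq_trans (leq_card_setU _ _) _.
have := card_pi_far_set S noC4 noC6; case: #|S| => [|n] /=.
  by rewrite muln0 leqn0 => /eqP ->.
by rewrite expnS expn1 mulnS leq_add2l.
Qed.

End LocatingDomination.

Lemma bigmin_leq (I : finType) (P : pred I) (F : I -> nat) m j :
  P j -> \big[minn/m]_(i | P i) F i <= F j.
Proof.
move=> Pj; have : j \in index_enum I by rewrite mem_index_enum.
elim: (index_enum I) => // i r IHr; rewrite inE big_cons => /predU1P [<- | /IHr le_j].
  by rewrite Pj geq_minl.
by case: (P i) => //; apply: leq_trans (geq_minr _ _) le_j.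
Qed.

Section DominationNumbers.
Variables (T : finType) (e : rel T).

Lemma LD_setT : LD_set e [set: T].
Proof.
apply/andP; split; apply/forallP => x; first by rewrite in_setT.
by apply/forallP => y; rewrite !in_setT andbF.
Qed.

Lemma gammaL_leq_card (L : {set T}) : LD_set e L -> gammaL e <= #|L|.
Proof. exact: bigmin_leq. Qed.

Lemma gammaL_leq_sqr_gammaM :
    (forall S, MLD_set e S -> exists2 L, LD_set e L & #|L| <= #|S| ^ 2) ->
  gammaL e <= gammaM e ^ 2.
Proof.
move=> LD_of_MLD; apply: (big_ind (fun m => gammaL e <= m ^ 2)) =>
  [|m n le_m le_n | S /LD_of_MLD [L LD_L le_LS]].
- apply: leq_trans (gammaL_leq_card LD_setT) _; rewrite cardsT.
  by case: #|T| => // n; rewrite expnS expn1 leq_pmulr.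
- by rewrite /minn; case: ltnP.
- exact: leq_trans (gammaL_leq_card LD_L) le_LS.
Qed.

End DominationNumbers.

Theorem proposition5 (T : finType) (e : rel T)
  (e_sym : symmetric e) (e_irr : irreflexive e)
  (e_conn : connected_graph e) (card2 : 2 <= #|T|)
  (noC4 : ~ has_cycle e 4) (noC6 : ~ has_cycle e 6) :
  (forall S : {set T}, MLD_set e S -> LD_set e (S :|: pi_set e S)) /\
  gammaL e <= gammaM e ^ 2.
Proof.
split; first exact: LD_set_pi_set.
apply: gammaL_leq_sqr_gammaM => S MLD_S.
exists (S :|: pi_far_set e S); first exact: LD_set_pi_far_set.
exact: card_setU_pi_far_set.
Qed.
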